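(* Let $\alpha\in(0,1]$, $w\in\mathbb{R}^p$ with $w_k>0$ for all $k$, and let $g(\beta)=\alpha\|w\circ\beta\|_1+\frac{1-\alpha}{2}\|\beta\|_2^2$. If $$\lambda\ge\max_{1\le k\le p}\frac{1}{n^2\alpha w_k}\Big\{\Big|\sum_{i=1}^n\sum_{j=1}^n\delta_i(x_{i,k}-x_{j,k})\mathbf{1}(y_i<y_j)\Big|+\sum_{i=1}^n\sum_{j=1}^n\mathbf{1}\{(i,j)\in\mathcal{K}\}\delta_i|x_{i,k}-x_{j,k}|\Big\},$$ then $\hat\beta=0$ is a minimizer of $\frac{1}{n^2}\sum_{i=1}^n\sum_{j=1}^n\delta_i\{e_i(\beta)-e_j(\beta)\}^-+\lambda g(\beta)$ over $\beta\in\mathbb{R}^p$.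
   Context: Data: $n\ge2$, $y_1,\dots,y_n>0$, $x_i=(x_{i,1},\dots,x_{i,p})^\top\in\mathbb{R}^p$, $\delta_i\in\{0,1\}$; $e_i(\beta)=\log y_i-\beta^\top x_i$; $a^-=\max(-a,0)$; $\circ$ is the elementwise product; $\mathcal{K}=\{(i,j): y_i=y_j,\ 1\le i\le n,\ 1\le j\le n\}$. *)

From mathcomp Require Import all_boot all_order all_algebra.
From mathcomp Require Import reals exp.
Set Implicit Arguments. Unset Strict Implicit. Unset Printing Implicit Defensive.
Import Order.TTheory GRing.Theory Num.Theory.
Local Open Scope ring_scope.

Section Defs.
Variables (R : realType) (n p : nat).

Definition negpart (a : R) : R := Num.max (- a) 0.

Definition resid (y : 'I_n -> R) (x : 'I_n -> 'I_p -> R) (beta : 'I_p -> R)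
    (i : 'I_n) : R :=
  ln (y i) - \sum_(k < p) beta k * x i k.

Definition enet_pen (alpha : R) (w : 'I_p -> R) (beta : 'I_p -> R) : R :=
  alpha * (\sum_(k < p) `|w k * beta k|)
  + (1 - alpha) / 2 * (\sum_(k < p) beta k ^+ 2).

Definition objective (y : 'I_n -> R) (x : 'I_n -> 'I_p -> R) (delta : 'I_n -> bool)
    (lambda alpha : R) (w : 'I_p -> R) (beta : 'I_p -> R) : R :=
  (n%:R ^+ 2)^-1 * (\sum_(i < n) \sum_(j < n)
      (delta i)%:R * negpart (resid y x beta i - resid y x beta j))
  + lambda * enet_pen alpha w beta.

Definition lambda_bound_k (y : 'I_n -> R) (x : 'I_n -> 'I_p -> R)
    (delta : 'I_n -> bool) (alpha : R) (w : 'I_p -> R) (k : 'I_p) : R :=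
  (n%:R ^+ 2 * alpha * w k)^-1 *
  (`| \sum_(i < n) \sum_(j < n)
        (delta i)%:R * (x i k - x j k) * (y i < y j)%R%:R |
   + \sum_(i < n) \sum_(j < n)
        (y i == y j)%R%:R * (delta i)%:R * `|x i k - x j k|).

End Defs.

From mathcomp Require Import all_boot all_order all_algebra.
From mathcomp Require Import reals exp.
From mathcomp Require Import ring lra.
Set Implicit Arguments. Unset Strict Implicit. Unset Printing Implicit Defensive.
Import Order.TTheory GRing.Theory Num.Theory.
Local Open Scope ring_scope.

(* The argument is a subgradient inequality for the (convex) Gehan loss
     L(beta) = sum_(i,j) delta_i (e_i(beta) - e_j(beta))^-
   at beta = 0.  Since e_i(beta) - e_j(beta) = (log y_i - log y_j) - beta.(x_i - x_j),
   the elementary minorant  (a - t)^- >= a^- + 1(a < 0) t  of the negative part,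
   applied with a = log y_i - log y_j (so 1(a < 0) = 1(y_i < y_j)), gives
     L(beta) >= L(0) + sum_k beta_k S_k,
     S_k = sum_(i,j) delta_i (x_ik - x_jk) 1(y_i < y_j)      (the Gehan score).
   The penalty vanishes at 0 and splits over the coordinates; the threshold on
   lambda yields |S_k| <= n^2 lambda alpha w_k (and lambda >= 0), so each
   coordinate term  beta_k S_k / n^2 + lambda g_k(beta_k)  is nonnegative.
   The tie term (pairs in K) of the threshold is nonnegative and is only
   dropped. *)

(* Linear minorant of the negative part at a: slope -1 left of 0, slope 0 right
   of 0 (the choice 0 of subgradient at a = 0 matches the strict 1(y_i < y_j)). *)
Lemma negpart_minorant (R : realType) (a t : R) :
  negpart a + (a < 0)%R%:R * t <= negpart (a - t).
Proof.
rewrite /negpart le_max; case: ltP => ha.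
- rewrite mul1r (max_idPl _); last lra.
  by apply/orP; left; lra.
- by rewrite mul0r addr0 (max_idPr _) ?lexx ?orbT //; lra.
Qed.

Section GehanLoss.
Variables (R : realType) (n p : nat).
Variables (y : 'I_n -> R) (x : 'I_n -> 'I_p -> R) (delta : 'I_n -> bool).
Hypothesis y_gt0 : forall i, 0 < y i.

Definition gehan_loss (beta : 'I_p -> R) : R :=
  \sum_(i < n) \sum_(j < n)
    (delta i)%:R * negpart (resid y x beta i - resid y x beta j).

(* The Gehan score of coordinate k: minus the k-th partial derivative of the
   loss at 0, as it appears in the threshold [lambda_bound_k]. *)
Definition gehan_score (k : 'I_p) : R :=
  \sum_(i < n) \sum_(j < n) (delta i)%:R * (x i k - x j k) * (y i < y j)%R%:R.

Lemma resid_diff (beta : 'I_p -> R) (i j : 'I_n) :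
  resid y x beta i - resid y x beta j
  = (ln (y i) - ln (y j)) - \sum_(k < p) beta k * (x i k - x j k).
Proof.
have -> : \sum_(k < p) beta k * (x i k - x j k)
    = \sum_(k < p) beta k * x i k - \sum_(k < p) beta k * x j k.
  by rewrite -sumrB; apply: eq_bigr => k _; rewrite mulrBr.
rewrite /resid; lra.
Qed.

Lemma gehan_pair_minorant (beta : 'I_p -> R) (i j : 'I_n) :
  (delta i)%:R * negpart (ln (y i) - ln (y j))
  + \sum_(k < p) beta k * ((delta i)%:R * (x i k - x j k) * (y i < y j)%R%:R)
  <= (delta i)%:R * negpart (resid y x beta i - resid y x beta j).
Proof.
have lt_ln : (ln (y i) - ln (y j) < 0) = (y i < y j).
  by rewrite subr_lt0 ltr_ln ?posrE.
have -> : \sum_(k < p) beta k * ((delta i)%:R * (x i k - x j k) * (y i < y j)%R%:R)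
    = (delta i)%:R * ((y i < y j)%R%:R * \sum_(k < p) beta k * (x i k - x j k)).
  by rewrite !mulr_sumr; apply: eq_bigr => k _; ring.
rewrite -mulrDr resid_diff -lt_ln ler_wpM2l //; exact: negpart_minorant.
Qed.

Lemma gehan_loss_linearisation (beta : 'I_p -> R) :
  gehan_loss (fun _ => 0) + \sum_(k < p) beta k * gehan_score k
  <= gehan_loss beta.
Proof.
have resid0 i : resid y x (fun _ => 0) i = ln (y i).
  by rewrite /resid big1 ?subr0 // => k _; rewrite mul0r.
have -> : \sum_(k < p) beta k * gehan_score k = \sum_(i < n) \sum_(j < n)
    \sum_(k < p) beta k * ((delta i)%:R * (x i k - x j k) * (y i < y j)%R%:R).
  rewrite (eq_bigr (fun k => \sum_(i < n) \sum_(j < n)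
      beta k * ((delta i)%:R * (x i k - x j k) * (y i < y j)%R%:R))).
    by rewrite exchange_big; apply: eq_bigr => i _; exact: exchange_big.
  move=> k _; rewrite /gehan_score mulr_sumr.
  by apply: eq_bigr => i _; rewrite mulr_sumr.
rewrite /gehan_loss -big_split; apply: ler_sum => i _.
rewrite -big_split; apply: ler_sum => j _.
by rewrite !resid0; exact: gehan_pair_minorant.
Qed.

Lemma tie_sum_ge0 (k : 'I_p) :
  0 <= \sum_(i < n) \sum_(j < n) (y i == y j)%R%:R * (delta i)%:R * `|x i k - x j k|.
Proof. by apply: sumr_ge0 => i _; apply: sumr_ge0 => j _; rewrite !mulr_ge0. Qed.

End GehanLoss.

Lemma enet_pen0 (R : realType) (p : nat) (alpha : R) (w : 'I_p -> R) :
  enet_pen alpha w (fun _ => 0) = 0.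
Proof.
by rewrite /enet_pen !big1 ?mulr0 ?addr0 // => k _; rewrite ?expr0n ?mulr0 ?normr0.
Qed.

Lemma enet_pen_coord (R : realType) (p : nat) (alpha : R) (w beta : 'I_p -> R) :
  enet_pen alpha w beta
  = \sum_(k < p) (alpha * `|w k * beta k| + (1 - alpha) / 2 * beta k ^+ 2).
Proof. by rewrite /enet_pen big_split /= !mulr_sumr. Qed.

(* One coordinate: if (c alpha w_k)^-1 (|s| + t) <= lambda with t >= 0, then
   lambda >= 0 and |s| <= c lambda alpha w_k, so the linear term b s / c is
   dominated by the penalty lambda g_k(b). *)
Lemma coord_term_ge0 (R : realType) (c alpha wk t lambda s b : R) :
  0 < c -> 0 < alpha <= 1 -> 0 < wk -> 0 <= t ->
  (c * alpha * wk)^-1 * (`|s| + t) <= lambda ->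
  0 <= c^-1 * (b * s) + lambda * (alpha * `|wk * b| + (1 - alpha) / 2 * b ^+ 2).
Proof.
move=> c_gt0 /andP[alpha_gt0 alpha_le1] wk_gt0 t_ge0 hlambda.
have m_gt0 : 0 < c * alpha * wk by rewrite !mulr_gt0.
have score_le : `|s| <= lambda * (c * alpha * wk).
  rewrite -ler_pdivrMr // mulrC; apply: le_trans hlambda.
  by rewrite ler_wpM2l ?lerDl // invr_ge0 ltW.
have lambda_ge0 : 0 <= lambda.
  by rewrite -(pmulr_lge0 _ m_gt0); apply: le_trans score_le.
have linear_ge : - (lambda * alpha * (wk * `|b|)) <= c^-1 * (b * s).
  have -> : lambda * alpha * (wk * `|b|) = c^-1 * (`|b| * (lambda * (c * alpha * wk))).
    by field; rewrite gt_eqF.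
  rewrite -mulrN; apply: ler_wpM2l; first by rewrite invr_ge0 ltW.
  by apply: lerNnormlW; rewrite normrM ler_wpM2l.
have quad_ge0 : 0 <= lambda * ((1 - alpha) / 2 * b ^+ 2).
  apply: mulr_ge0 => //; apply: mulr_ge0; last exact: sqr_ge0.
  by apply: divr_ge0; lra.
rewrite normrM (gtr0_norm wk_gt0) mulrDr; lra.
Qed.

Theorem mainTheorem5 (R : realType) (n p : nat) (hn : (2 <= n)%N)
    (y : 'I_n -> R) (x : 'I_n -> 'I_p -> R) (delta : 'I_n -> bool)
    (hy : forall i, 0 < y i)
    (alpha : R) (halpha : 0 < alpha <= 1)
    (w : 'I_p -> R) (hw : forall k, 0 < w k)
    (lambda : R)
    (hlambda : forall k : 'I_p, lambda_bound_k y x delta alpha w k <= lambda) :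
  forall beta : 'I_p -> R,
    objective y x delta lambda alpha w (fun _ => 0)
    <= objective y x delta lambda alpha w beta.
Proof.
move=> beta.
have n2_gt0 : 0 < (n%:R ^+ 2 : R) by rewrite exprn_gt0 // ltr0n; apply: leq_trans hn.
have n2inv_ge0 : 0 <= (n%:R ^+ 2 : R)^-1 by rewrite invr_ge0 ltW.
have objectiveE b : objective y x delta lambda alpha w b
    = (n%:R ^+ 2)^-1 * gehan_loss y x delta b + lambda * enet_pen alpha w b by [].
have coords_ge0 : 0 <= (n%:R ^+ 2)^-1 * \sum_(k < p) beta k * gehan_score y x delta k
                       + lambda * enet_pen alpha w beta.
  rewrite enet_pen_coord !mulr_sumr -big_split; apply: sumr_ge0 => k _.
  exact: coord_term_ge0 (hw k) (tie_sum_ge0 y x delta k) (hlambda k).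
have := gehan_loss_linearisation x delta hy beta.
move/(ler_wpM2l n2inv_ge0).
rewrite !objectiveE enet_pen0 mulr0 addr0 mulrDr; lra.
Qed.
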